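(* Let $D$, $C$, $A$ be measurable spaces and $\mathcal{D}$ a probability distribution on $D$. Suppose $\mathrm{enc} : D \to C \times A$ and $\mathrm{dec} : C \times A \to D$ are mutually inverse measurable bijections such that the pushforward $\mathrm{enc}_*\mathcal{D}$ is a product distribution $\mathcal{C} \times \mathcal{A}$ on $C \times A$, and let the discriminative classifier be $\mathrm{cls} = \pi_A \circ \mathrm{enc} : D \to A$ (so $\mathrm{cls}_*\mathcal{D} = \mathcal{A}$ is a balanced attribute of $\mathcal{D}$). Let $\mathrm{put} : D \times A \to D$, $\mathrm{put}(d,a) = \mathrm{dec}(\pi_C(\mathrm{enc}(d)), a)$. Define the stochastic map $\mathrm{cls}^\dagger : A \to D$ sending $a$ to the distribution of $\mathrm{put}(d, a)$ where $d \sim \mathcal{D}$ is drawn independently. Then $\mathrm{cls}^\dagger$ is a Bayesian inversion of $\mathrm{cls}$ with respect to $\mathcal{D}$: the joint distribution of $(x, \mathrm{cls}(x))$ for $x \sim \mathcal{D}$ equals the joint distribution of $(x', a)$ where $a \sim \mathrm{cls}_*\mathcal{D}$ and $x' \sim \mathrm{cls}^\dagger(a)$.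
   Context: A Bayesian inversion of a stochastic map $f : X \to Y$ with respect to a distribution $\mathcal{P}$ on $X$ is a stochastic map $f^\dagger : Y \to X$ such that, in distribution, the pair $(x, f(x))$ with $x \sim \mathcal{P}$ coincides with the pair $(f^\dagger(y), y)$ with $y \sim f_*\mathcal{P}$. Here $\pi_C, \pi_A$ denote the product projections. *)

From HB Require Import structures.
From mathcomp Require Import all_boot all_order all_algebra.
From mathcomp Require Import all_classical all_reals all_analysis.
Set Implicit Arguments. Unset Strict Implicit. Unset Printing Implicit Defensive.
Import Order.TTheory GRing.Theory Num.Theory.
Local Open Scope classical_set_scope.
Local Open Scope ereal_scope.

Definition cls (D C A : Type) (enc : D -> C * A) : D -> A := fun d => (enc d).2.

Definition put (D C A : Type) (enc : D -> C * A) (dec : C * A -> D) :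
  D -> A -> D := fun d a => dec ((enc d).1, a).

(* cls^dagger(a) = law of put(d, a) with d ~ P: a stochastic map A -> D,
   represented as a family of (probability) measures on D indexed by A. *)
Definition cls_dagger d (D : measurableType d) (C A : Type) (R : realType)
  (P : set D -> \bar R) (enc : D -> C * A) (dec : C * A -> D) :
  A -> set D -> \bar R :=
  fun a => pushforward P (fun x => put enc dec x a).

Definition graph_law dX dY (X : measurableType dX) (Y : measurableType dY)
  (R : realType) (P : set X -> \bar R) (f : X -> Y) : set (X * Y) -> \bar R :=
  pushforward P (fun x => (x, f x)).

Definition inv_joint_law dX dY (X : measurableType dX) (Y : measurableType dY)
  (R : realType) (Q : set Y -> \bar R) (k : Y -> set X -> \bar R) :
  set (X * Y) -> \bar R :=
  fun E => \int[Q]_y k y [set x | E (x, y)].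

Definition is_bayesian_inversion dX dY (X : measurableType dX)
  (Y : measurableType dY) (R : realType) (P : set X -> \bar R) (f : X -> Y)
  (fdag : Y -> set X -> \bar R) : Prop :=
  forall E : set (X * Y), measurable E ->
    graph_law P f E = inv_joint_law (pushforward P f) fdag E.

(* Since dec (enc x) = x, the pair (x, cls x) is the image of enc x, which
   has law PC \x PA, under (c, a) |-> (dec (c, a), a).  Integrate this product
   measure over the A-coordinate last.  The section at a is the law of
   dec (c, a) for c ~ PC; since the C-marginal of enc x is PC, this is the law
   of put x a for x ~ P, i.e. cls^dagger a.  The outer integral is against PA,
   the A-marginal of enc x, which is the law of cls x. *)
From HB Require Import structures.
From mathcomp Require Import all_boot all_order all_algebra.
From mathcomp Require Import all_classical all_reals all_analysis.
Local Open Scope classical_set_scope.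
Local Open Scope ereal_scope.

Section pushforward_integral.
Context {d1 d2 : measure_display}.
Context {X : measurableType d1} {Y : measurableType d2} {R : realType}.
Context {mu : measure X R} {phi : X -> Y}.
Hypothesis mphi : measurable_fun setT phi.

Lemma eq_pushforward_integral (nu : measure Y R) (f : Y -> \bar R) :
    (forall B, measurable B -> pushforward mu phi B = nu B) ->
  \int[pushforward mu phi]_y f y = \int[nu]_y f y.
Proof.
(* [pushforward mu phi] is canonically a measure only along an mfun. *)
pose phi' : {mfun X >-> Y} :=
  HB.pack phi (isMeasurableFun.Build _ _ _ _ _ mphi).
move=> phi_law; apply: (eq_measure_integral nu (m1 := pushforward mu phi')).
by move=> B mB _; exact: phi_law.
Qed.

End pushforward_integral.

Section product_measure_sections.
Context {d1 d2 : measure_display}.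
Context {T1 : measurableType d1} {T2 : measurableType d2} {R : realType}.

Lemma product_measure_ysectionE (m1 : sigma_finite_measure T1 R)
    (m2 : sigma_finite_measure T2 R) (F : set (T1 * T2)) : measurable F ->
  (m1 \x m2) F = \int[m2]_y m1 (ysection F y).
Proof.
by apply: (product_measure_unique (m' := m1 \x^ m2)) => A B mA mB;
  exact: product_measure2E.
Qed.

Lemma measurable_ysection_set (F : set (T1 * T2)) (y : T2) :
  measurable F -> measurable [set x | F (x, y)].
Proof.
by move=> mF; rewrite -[X in measurable X]/(_ @^-1` F) -ysectionE;
  exact: measurable_ysection.
Qed.

Variables (P1 : probability T1 R) (P2 : probability T2 R).

Lemma product_probability_setXT (B : set T1) : measurable B ->
  (P1 \x P2) (B `*` setT) = P1 B.
Proof.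
by move=> mB; rewrite product_measure1E // -[RHS]mule1; congr (_ * _);
  exact: probability_setT.
Qed.

Lemma product_probability_setTX (B : set T2) : measurable B ->
  (P1 \x P2) (setT `*` B) = P2 B.
Proof.
by move=> mB; rewrite product_measure1E // -[RHS]mul1e; congr (_ * _);
  exact: probability_setT.
Qed.

End product_measure_sections.

Section encoder.
Context {R : realType} {dD dC dA : measure_display}.
Context {D : measurableType dD} {C : measurableType dC} {A : measurableType dA}.
Context {P : probability D R} {PC : probability C R} {PA : probability A R}.
Context {enc : D -> C * A} {dec : C * A -> D}.
Hypothesis mdec : measurable_fun setT dec.
Hypothesis encK : cancel enc dec.
Hypothesis enc_law :
  forall E : set (C * A), measurable E -> pushforward P enc E = (PC \x PA) E.

Let measurable_dec_preimage {S : set D} :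
  measurable S -> measurable [set p : C * A | S (dec p)].
Proof. by move=> mS; rewrite -[X in measurable X]setTI; exact: mdec. Qed.

Lemma measurable_dec_snd_preimage (E : set (D * A)) :
  measurable E -> measurable [set p : C * A | E (dec p, p.2)].
Proof.
move=> mE; rewrite -[X in measurable X]setTI.
exact: (measurable_fun_pair mdec measurable_snd).
Qed.

Lemma graph_law_clsE (E : set (D * A)) : measurable E ->
  graph_law P (cls enc) E = (PC \x PA) [set p | E (dec p, p.2)].
Proof.
move=> mE; rewrite -enc_law; last exact: measurable_dec_snd_preimage.
by congr (P _); apply/funext => x; rewrite /preimage /cls /= encK.
Qed.

Lemma cls_law (B : set A) : measurable B -> pushforward P (cls enc) B = PA B.
Proof.
move=> mB; rewrite -(product_probability_setTX PC PA) // -enc_law; last first.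
  exact: measurableX.
by congr (P _); apply/seteqP; split => [x|x []].
Qed.

Lemma cls_daggerE (a : A) (S : set D) : measurable S ->
  cls_dagger P enc dec a S = PC [set c | S (dec (c, a))].
Proof.
move=> mS; have mSa := measurable_ysection_set _ a (measurable_dec_preimage mS).
rewrite -(product_probability_setXT PC PA) // -enc_law; last first.
  exact: measurableX.
by congr (P _); apply/seteqP; split => [x|x []].
Qed.

End encoder.

Theorem proposition3 (R : realType) (dD dC dA : measure_display)
  (D : measurableType dD) (C : measurableType dC) (A : measurableType dA)
  (P : probability D R) (PC : probability C R) (PA : probability A R)
  (enc : D -> C * A) (dec : C * A -> D) :
  measurable_fun setT enc -> measurable_fun setT dec ->
  cancel enc dec -> cancel dec enc ->
  (forall E : set (C * A), measurable E -> pushforward P enc E = (PC \x PA) E) ->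
  is_bayesian_inversion P (cls enc) (cls_dagger P enc dec).
Proof.
move=> menc mdec encK _ enc_law E mE.
have mcls : measurable_fun setT (cls enc).
  exact: measurableT_comp measurable_snd menc.
rewrite (graph_law_clsE mdec encK enc_law) //.
rewrite product_measure_ysectionE; last first.
  exact: measurable_dec_snd_preimage.
rewrite /inv_joint_law (eq_pushforward_integral mcls _ _ (cls_law enc_law)).
apply: eq_integral => a _; rewrite ysectionE (cls_daggerE mdec enc_law) //.
exact: measurable_ysection_set.
Qed.
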